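(* Let $\mu$ be a measure on a set $\Omega\subset\mathbb{F}^d$ ($\mathbb{F}=\mathbb{R}$ or $\mathbb{C}$) with $\mu(\Omega)=1$, and let $P$ be a finite dimensional space of $\mu$-integrable functions $\Omega\to\mathbb{F}$ which contains the constant functions. Let $$H=P\ominus\operatorname{span}\{1\}=\Bigl\{p\in P:\int_\Omega p\,d\mu=0\Bigr\}.$$ Let $\Phi=(v_1,\ldots,v_n)$ with $v_j\in\Omega$, and let $w=(w_j)\in\mathbb{R}^n$ be weights with $w_1+\cdots+w_n=1$. Write $H$ as a direct sum $H=\bigoplus_\ell H^{(\ell)}$, let $K_\ell$ be the reproducing kernel of $H^{(\ell)}$, and let $c_\ell>0$. Then $$A_{w,c}(\Phi):=\sum_{j=1}^n\sum_{k=1}^n w_jw_k\sum_\ell c_\ell K_\ell(v_j,v_k)\ \ge\ 0,$$ with equality if and only if $(v_j),(w_j)$ is a weighted design for $P$, i.e. $\int_\Omega p\,d\mu=\sum_{j=1}^n w_jp(v_j)$ for all $p\in P$.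
   Context: The inner product used is $\langle f,g\rangle_\mu=\int_\Omega f\overline{g}\,d\mu$. The reproducing kernel of a finite dimensional subspace $V$ (with respect to this inner product) is $K(x,y)=\sum_s Y_s(x)\overline{Y_s(y)}$ where $(Y_s)$ is any orthonormal basis of $V$; it satisfies $f(x)=\int_\Omega K(x,y)f(y)\,d\mu(y)$ for all $f\in V$. *)

From HB Require Import structures.
From mathcomp Require Import all_boot all_order all_algebra.
From mathcomp Require Import all_classical all_reals all_analysis.
From mathcomp Require Import complex.

Set Implicit Arguments.
Unset Strict Implicit.
Unset Printing Implicit Defensive.

Import Order.TTheory GRing.Theory Num.Theory.
Local Open Scope ring_scope.
Local Open Scope classical_set_scope.

Section Defs.
Context {d : measure_display} {T : measurableType d} {R : realType}.

(* The scalar field: F = R if [isR] is true, F = C if [isR] is false.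
   All scalars and functions are represented inside C = R[i]. *)
Definition scalar (isR : bool) (a : R[i]) : bool :=
  if isR then a \is Num.real else true.

Definition cintegrable (mu : {measure set T -> \bar R}) (f : T -> R[i]) :=
  mu.-integrable setT (fun x => (complex.Re (f x))%:E) /\
  mu.-integrable setT (fun x => (complex.Im (f x))%:E).

Definition cint (mu : {measure set T -> \bar R}) (f : T -> R[i]) : R[i] :=
  Complex (fine (\int[mu]_x (complex.Re (f x))%:E)%E) (fine (\int[mu]_x (complex.Im (f x))%:E)%E).

Definition cinner (mu : {measure set T -> \bar R}) (f g : T -> R[i]) : R[i] :=
  cint mu (fun x => f x * conjc (g x)).

Definition fspan (isR : bool) (m : nat) (f : 'I_m -> T -> R[i]) : set (T -> R[i]) :=
  [set g | exists a : 'I_m -> R[i], (forall i, scalar isR (a i)) /\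
             g = (fun x => \sum_(i < m) a i * f i x)].

Definition c_orthonormal (mu : {measure set T -> \bar R}) (m : nat)
    (Y : 'I_m -> T -> R[i]) : Prop :=
  forall s t : 'I_m,
    cintegrable mu (fun x => Y s x * conjc (Y t x)) /\
    cinner mu (Y s) (Y t) = (s == t)%:R.

Definition repr_kernel (m : nat) (Y : 'I_m -> T -> R[i]) (x y : T) : R[i] :=
  \sum_(s < m) Y s x * conjc (Y s y).

End Defs.

From Pilot Require Import Defs.
From HB Require Import structures.
From mathcomp Require Import all_boot all_order all_algebra.
From mathcomp Require Import all_classical all_reals all_analysis.
From mathcomp Require Import complex.
Import Order.TTheory GRing.Theory Num.Theory.
Local Open Scope ring_scope.
Local Open Scope classical_set_scope.
Local Open Scope complex_scope.

(** Expanding the kernels, [A] is [sum_l c_l sum_s |Q(Y_ls)|^2], where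
    [Q p = sum_j w_j p(v_j)] is the quadrature rule and [(Y_ls)_s] is the
    basis of [H^(l)]; so [A >= 0], with equality iff [Q] vanishes on every
    [H^(l)], hence on [H].  Since [P = H + span{1}], [Q 1 = 1 = int 1] and
    [Q p - int p = Q (p - int p)] with [p - int p] in [H], this says exactly
    that [Q] agrees with the integral on [P]. *)

Section ComplexIntegral.
Context {d : measure_display} {T : measurableType d} {R : realType}.
Variable mu : {measure set T -> \bar R}.

Lemma cintB (f g : T -> R[i]) : cintegrable mu f -> cintegrable mu g ->
  cint mu (fun x => f x - g x) = cint mu f - cint mu g.
Proof.
move=> [ReF ImF] [ReG ImG]; rewrite /cint.
have -> : (fun x => (complex.Re (f x - g x))%:E) =
          (fun x => (complex.Re (f x) - complex.Re (g x))%:E).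
  by apply/funext => x; case: (f x); case: (g x).
have -> : (fun x => (complex.Im (f x - g x))%:E) =
          (fun x => (complex.Im (f x) - complex.Im (g x))%:E).
  by apply/funext => x; case: (f x); case: (g x).
have := RintegralB measurableT ReF ReG; have := RintegralB measurableT ImF ImG.
by rewrite /Rintegral => -> ->.
Qed.

Lemma cint_real (p : T -> R[i]) :
  (forall x, p x \is Num.real) -> cint mu p \is Num.real.
Proof.
move=> p_real; rewrite /cint complex_real.
have -> : (fun x => (complex.Im (p x))%:E) = cst 0%E.
  by apply/funext => x; rewrite /= -[p x]RRe_real.
by rewrite integral0.
Qed.

Hypothesis mu1 : mu setT = 1%E.

Lemma integrable_cst_prob (k : R) : mu.-integrable setT (EFin \o cst k).
Proof.
apply/integrableP; split; first exact/measurable_realfun.measurable_EFinP/measurable_cst.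
by rewrite /comp /= integral_cst // mu1 mule1 ltry.
Qed.

Lemma cintegrable_cst (a : R[i]) : cintegrable mu (fun=> a).
Proof. by split; exact: integrable_cst_prob. Qed.

Lemma cint_cst (a : R[i]) : cint mu (fun=> a) = a.
Proof. by rewrite /cint !integral_cst // mu1 !mule1 /=; case: a. Qed.

End ComplexIntegral.

Section Span.
Context {d : measure_display} {T : measurableType d} {R : realType}.
Variables (isR : bool) (m : nat) (f : 'I_m -> T -> R[i]).

Lemma fspan_gen i : fspan isR f (f i).
Proof.
exists (fun k => (k == i)%:R); split.
  by move=> k; rewrite /Defs.scalar; case: isR => //; exact: realn.
apply/funext => x; rewrite (bigD1 i) //= eqxx mul1r big1 ?addr0 // => k.
by move=> /negbTE ->; rewrite mul0r.
Qed.

Lemma fspan_subZ (p q : T -> R[i]) (a : R[i]) :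
  Defs.scalar isR a -> fspan isR f p -> fspan isR f q ->
  fspan isR f (fun x => p x - a * q x).
Proof.
move=> Sa [ap [Sap ->]] [aq [Saq ->]].
exists (fun i => ap i - a * aq i); split.
  move=> i; move: Sa (Sap i) (Saq i); rewrite /Defs.scalar.
  by case: isR => // ? ? ?; rewrite rpredB ?rpredM.
apply/funext => x; rewrite mulr_sumr -sumrB.
by apply: eq_bigr => i _; rewrite mulrBl mulrA.
Qed.

End Span.

Section Quadrature.
Context {d : measure_display} {T : measurableType d} {R : realType}.
Context {n : nat} (v : 'I_n -> T) (w : 'I_n -> R).

Definition quadrature (p : T -> R[i]) : R[i] := \sum_(j < n) (w j)%:C * p (v j).

Lemma quadrature_sum m (f : 'I_m -> T -> R[i]) :
  quadrature (fun x => \sum_(i < m) f i x) = \sum_(i < m) quadrature (f i).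
Proof.
rewrite /quadrature exchange_big /=.
by apply: eq_bigr => j _; rewrite mulr_sumr.
Qed.

Lemma quadratureZ (a : R[i]) (p : T -> R[i]) :
  quadrature (fun x => a * p x) = a * quadrature p.
Proof. by rewrite /quadrature mulr_sumr; apply: eq_bigr => j _; rewrite mulrCA. Qed.

Lemma quadratureB_cst (p : T -> R[i]) (a : R[i]) : \sum_(j < n) w j = 1 ->
  quadrature (fun x => p x - a) = quadrature p - a.
Proof.
move=> w1; rewrite /quadrature.
under eq_bigr do rewrite mulrBr.
by rewrite sumrB -mulr_suml -rmorph_sum w1 mul1r.
Qed.

Lemma quadrature_fspan_eq0 {isR : bool} {m} {f : 'I_m -> T -> R[i]} {g : T -> R[i]} :
  (forall i, quadrature (f i) = 0) -> fspan isR f g -> quadrature g = 0.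
Proof.
move=> Qf0 [a [_ ->]]; rewrite quadrature_sum big1 // => i _.
by rewrite quadratureZ Qf0 mulr0.
Qed.

Lemma repr_kernel_quadrature m (Y : 'I_m -> T -> R[i]) :
  \sum_(j < n) \sum_(k < n) (w j * w k)%:C * repr_kernel Y (v j) (v k) =
  \sum_(s < m) quadrature (Y s) * (quadrature (Y s))^*.
Proof.
rewrite /repr_kernel /quadrature.
under [RHS]eq_bigr => s _.
  rewrite rmorph_sum mulr_suml.
  under eq_bigr do rewrite mulr_sumr.
  over.
rewrite [RHS]exchange_big; apply: eq_bigr => j _ /=.
rewrite [RHS]exchange_big; apply: eq_bigr => k _ /=.
rewrite mulr_sumr; apply: eq_bigr => s _.
have wkJ : ((w k)%:C)^*%R = (w k)%:C := conjc_real (w k).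
by rewrite !rmorphM /= wkJ mulrACA.
Qed.

Lemma repr_kernels_quadrature L (nl : 'I_L -> nat)
    (Y : forall l, 'I_(nl l) -> T -> R[i]) (c : 'I_L -> R) :
  \sum_(j < n) \sum_(k < n)
     (w j * w k)%:C * \sum_(l < L) (c l)%:C * repr_kernel (Y l) (v j) (v k) =
  \sum_(l < L) (c l)%:C * \sum_(s < nl l) quadrature (Y l s) * (quadrature (Y l s))^*.
Proof.
under eq_bigr do under eq_bigr do rewrite mulr_sumr.
under eq_bigr do rewrite exchange_big /=; rewrite exchange_big /=.
apply: eq_bigr => l _; rewrite -repr_kernel_quadrature !mulr_sumr.
by apply: eq_bigr => j _; rewrite mulr_sumr; apply: eq_bigr => k _; rewrite mulrCA.
Qed.

End Quadrature.

Lemma weighted_normsq_ge0 (R : rcfType) L (nl : 'I_L -> nat) (c : 'I_L -> R)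
  (b : forall l, 'I_(nl l) -> R[i]) : (forall l, 0 <= c l) ->
  0 <= \sum_(l < L) (c l)%:C * \sum_(s < nl l) b l s * (b l s)^*.
Proof.
move=> c_ge0; apply: sumr_ge0 => l _; apply: mulr_ge0; first by rewrite ler0c.
by apply: sumr_ge0 => s _; exact: mulcJ_ge0.
Qed.

Lemma weighted_normsq_eq0 (R : rcfType) L (nl : 'I_L -> nat) (c : 'I_L -> R)
  (b : forall l, 'I_(nl l) -> R[i]) : (forall l, 0 < c l) ->
  (\sum_(l < L) (c l)%:C * \sum_(s < nl l) b l s * (b l s)^* = 0) <->
  (forall l s, b l s = 0).
Proof.
move=> c_gt0; split=> [E0 l s | b0]; last first.
  by apply: big1 => l _; rewrite big1 ?mulr0 // => s _; rewrite b0 mul0r.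
have term_ge0 k : 0 <= (c k)%:C * \sum_(t < nl k) b k t * (b k t)^*.
  apply: mulr_ge0; first by rewrite ler0c ltW.
  by apply: sumr_ge0 => t _; exact: mulcJ_ge0.
move/eqP: (psumr_eq0P (fun l _ => term_ge0 l) E0 (i:=l) isT).
have cl_gt0 : 0 < (c l)%:C by rewrite -[0]/(0%:C) ltcR.
rewrite mulf_eq0 (gt_eqF cl_gt0) /= => /eqP Sl0.
move/eqP: (psumr_eq0P (fun s _ => mulcJ_ge0 (b l s)) Sl0 (i:=s) isT).
by rewrite mulf_eq0 conjc_eq0 orbb => /eqP.
Qed.

Definition weighted_design {d} {T : measurableType d} {R : realType}
    (mu : {measure set T -> \bar R}) (P : set (T -> R[i]))
    {n} (v : 'I_n -> T) (w : 'I_n -> R) :=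
  forall p, P p -> cint mu p = quadrature v w p.

Lemma weighted_design_of_mean_zero (isR : bool) d (T : measurableType d)
  (R : realType) (mu : {measure set T -> \bar R}) (mu1 : mu setT = 1%E)
  m (f : 'I_m -> T -> R[i]) n (v : 'I_n -> T) (w : 'I_n -> R) :
  \sum_(j < n) w j = 1 ->
  (isR -> forall p, fspan isR f p -> forall x, p x \is Num.real) ->
  (forall p, fspan isR f p -> cintegrable mu p) ->
  fspan isR f (fun=> 1) ->
  (forall h, fspan isR f h -> cint mu h = 0 -> quadrature v w h = 0) ->
  weighted_design mu (fspan isR f) v w.
Proof.
move=> w1 P_real P_int P1 Q0 p Pp.
have Sp : Defs.scalar isR (cint mu p).
  by rewrite /Defs.scalar; case: ifP => // /P_real/(_ p Pp)/cint_real.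
have Ph : fspan isR f (fun x => p x - cint mu p).
  by under eq_fun do rewrite -[cint mu p]mulr1; exact: fspan_subZ Sp Pp P1.
have h0 : cint mu (fun x => p x - cint mu p) = 0.
  by rewrite cintB ?cint_cst ?subrr //; [exact: P_int | exact: cintegrable_cst].
by apply/eqP; rewrite eq_sym -subr_eq0 -quadratureB_cst // Q0.
Qed.

Theorem theorem3p1 (isR : bool) (d : measure_display) (T : measurableType d)
  (R : realType) (mu : {measure set T -> \bar R}) (mu1 : mu setT = 1%E)
  (P : set (T -> R[i]))
  (HPfin : exists (m : nat) (f : 'I_m -> T -> R[i]), P = fspan isR f)
  (HPval : isR -> forall p, P p -> forall x, p x \is Num.real)
  (HPint : forall p, P p -> cintegrable mu p)
  (HPconst : P (fun _ => 1))
  (L : nat) (Hl : 'I_L -> set (T -> R[i]))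
  (nl : 'I_L -> nat) (Y : forall l : 'I_L, 'I_(nl l) -> T -> R[i])
  (HYbasis : forall l, Hl l = fspan isR (Y l))
  (HYon : forall l, c_orthonormal mu (Y l))
  (HlH : forall l, Hl l `<=` [set p | P p /\ cint mu p = 0])
  (Hsum : forall h, P h -> cint mu h = 0 ->
     exists hs : 'I_L -> T -> R[i],
       (forall l, Hl l (hs l)) /\ h = (fun x => \sum_(l < L) hs l x))
  (Hdirect : forall hs hs' : 'I_L -> T -> R[i],
       (forall l, Hl l (hs l)) -> (forall l, Hl l (hs' l)) ->
       (fun x => \sum_(l < L) hs l x) = (fun x => \sum_(l < L) hs' l x) ->
       hs = hs')
  (c : 'I_L -> R) (Hc : forall l, 0 < c l)
  (n : nat) (v : 'I_n -> T) (w : 'I_n -> R) (Hw : \sum_(j < n) w j = 1) :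
  let A := \sum_(j < n) \sum_(k < n)
             (w j * w k)%:C * \sum_(l < L) (c l)%:C * repr_kernel (Y l) (v j) (v k) in
  0 <= A /\
  (A = 0 <-> forall p, P p -> cint mu p = \sum_(j < n) (w j)%:C * p (v j)).
Proof.
move=> A; rewrite {}/A repr_kernels_quadrature.
split; first by apply: weighted_normsq_ge0 => l; exact: ltW.
rewrite weighted_normsq_eq0 //; split=> [Q0 | design l s].
- have [m [f Pf]] := HPfin; subst P.
  apply: weighted_design_of_mean_zero => // h Ph h0.
  have [hs [Hhs ->]] := Hsum h Ph h0.
  rewrite quadrature_sum big1 // => l _.
  by apply: (quadrature_fspan_eq0 _ _ (isR := isR) (Q0 l)); rewrite -HYbasis.
- have [PY <-] : P (Y l s) /\ cint mu (Y l s) = 0.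
    by apply: HlH; rewrite HYbasis; exact: fspan_gen.
  by rewrite design.
Qed.
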